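(* Let $-\infty\le a<b\le\infty$, let $f,g$ be differentiable on $(a,b)$ with $g'\ne0$ on $(a,b)$, and suppose there is $c\in(a,b)$ such that either (I) $f'/g'$ is strictly increasing on $(a,c)$ and strictly decreasing on $(c,b)$, or (II) $f'/g'$ is strictly decreasing on $(a,c)$ and strictly increasing on $(c,b)$. (i) Suppose $\lim_{x\to a^+}f(x)=\lim_{x\to a^+}g(x)=0$ and $\lim_{x\to a^+}f(x)/g(x)=\lambda\in\mathbb R$. In case (I), $f(x)/g(x)>\lambda$ for all $x\in(a,b)$ if and only if $\lim_{x\to b^-}f(x)/g(x)\ge\lambda$; in case (II), $f(x)/g(x)<\lambda$ for all $x\in(a,b)$ if and only if $\lim_{x\to b^-}f(x)/g(x)\le\lambda$. (ii) Suppose $\lim_{x\to b^-}f(x)=\lim_{x\to b^-}g(x)=0$ and $\lim_{x\to b^-}f(x)/g(x)=\lambda\in\mathbb R$. In case (I), $f(x)/g(x)>\lambda$ for all $x\in(a,b)$ if and only if $\lim_{x\to a^+}f(x)/g(x)\ge\lambda$; in case (II), $f(x)/g(x)<\lambda$ for all $x\in(a,b)$ if and only if $\lim_{x\to a^+}f(x)/g(x)\le\lambda$. (The relevant one-sided limits of $f/g$ exist in $[-\infty,\infty]$ under these hypotheses.) *)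

From Stdlib Require Import Reals.
Open Scope R_scope.

Inductive ER : Type := Fin (r : R) | PInf | MInf.

Definition ER_lt (u v : ER) : Prop :=
  match u, v with
  | Fin x, Fin y => x < y
  | MInf, Fin _ | MInf, PInf | Fin _, PInf => True
  | _, _ => False
  end.

Definition in_ooI (a b : ER) (x : R) : Prop :=
  (match a with Fin a0 => a0 < x | MInf => True | PInf => False end) /\
  (match b with Fin b0 => x < b0 | PInf => True | MInf => False end).

Definition ev_left (a b : ER) (P : R -> Prop) : Prop :=
  match a with
  | Fin a0 => exists d, 0 < d /\ forall x, in_ooI a b x -> x < a0 + d -> P x
  | MInf => exists M, forall x, in_ooI a b x -> x < M -> P x
  | PInf => False
  end.

Definition ev_right (a b : ER) (P : R -> Prop) : Prop :=
  match b with
  | Fin b0 => exists d, 0 < d /\ forall x, in_ooI a b x -> b0 - d < x -> P x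
  | PInf => exists M, forall x, in_ooI a b x -> M < x -> P x
  | MInf => False
  end.

Definition tends (ev : (R -> Prop) -> Prop) (F : R -> R) (L : ER) : Prop :=
  match L with
  | Fin l => forall eps, 0 < eps -> ev (fun x => Rabs (F x - l) < eps)
  | PInf => forall M, ev (fun x => M < F x)
  | MInf => forall M, ev (fun x => F x < M)
  end.

Definition lim_left (a b : ER) (F : R -> R) (L : ER) : Prop := tends (ev_left a b) F L.
Definition lim_right (a b : ER) (F : R -> R) (L : ER) : Prop := tends (ev_right a b) F L.

Definition ER_ge (L : ER) (lam : R) : Prop :=
  match L with Fin l => lam <= l | PInf => True | MInf => False end.
Definition ER_le (L : ER) (lam : R) : Prop :=
  match L with Fin l => l <= lam | PInf => False | MInf => True end.

Definition strict_incr_on (a b : ER) (h : R -> R) : Prop :=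
  forall x y, in_ooI a b x -> in_ooI a b y -> x < y -> h x < h y.
Definition strict_decr_on (a b : ER) (h : R -> R) : Prop :=
  forall x y, in_ooI a b x -> in_ooI a b y -> x < y -> h y < h x.

(* For a < y < x < b put w = g y / g x; since g' never vanishes and g -> 0 at a,
   0 < w < 1, and Cauchy's mean value theorem gives q x = w q y + (1 - w) r z for some
   z in (y, x): q x is a convex combination of q y and r z.  Letting y -> a (so w -> 0)
   shows q <= r wherever r increases, hence q increases on (a, c] and stays above lam.
   Past c, where r decreases, q decreases for ever once it reaches r, and otherwise
   increases; so q is eventually monotone and has a limit at b.  If q x <= lam for some
   x > c, the combination of q c > lam and r z forces r x < q x, after which q drops
   strictly below lam.  Case II is case I for -f, and part (ii) is part (i) after the
   reflection x |-> -x, which exchanges a and b but keeps the monotonicity pattern. *)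

From Stdlib Require Import Reals Lra Psatz Classical Ranalysis5.
Open Scope R_scope.

Definition negER (u : ER) : ER :=
  match u with Fin r => Fin (- r) | PInf => MInf | MInf => PInf end.

Lemma negER_involutive u : negER (negER u) = u.
Proof. destruct u; simpl; rewrite ?Ropp_involutive; reflexivity. Qed.

Ltac solve_in_ooI := unfold in_ooI in *; simpl in *; intuition lra.

Lemma in_ooI_opp a b x : in_ooI (negER b) (negER a) x <-> in_ooI a b (- x).
Proof. destruct a, b; solve_in_ooI. Qed.

Lemma in_ooI_between a b u v z :
  in_ooI a b u -> in_ooI a b v -> u <= z <= v -> in_ooI a b z.
Proof. destruct a, b; solve_in_ooI. Qed.

Lemma in_ooI_lower a b c x : in_ooI a b c -> (in_ooI a (Fin c) x <-> in_ooI a b x /\ x < c).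
Proof. destruct a, b; solve_in_ooI. Qed.

Lemma in_ooI_upper a b c x : in_ooI a b c -> (in_ooI (Fin c) b x <-> in_ooI a b x /\ c < x).
Proof. destruct a, b; solve_in_ooI. Qed.

Lemma in_ooI_above a b u : in_ooI a b u -> exists x, in_ooI a b x /\ u < x.
Proof.
  intros Hu; destruct b as [b| |].
  - exists ((u + b) / 2); destruct a; solve_in_ooI.
  - exists (u + 1); destruct a; solve_in_ooI.
  - destruct a; solve_in_ooI.
Qed.

Lemma in_ooI_below a b u : in_ooI a b u -> exists x, in_ooI a b x /\ x < u.
Proof.
  intros Hu; destruct a as [a| |].
  - exists ((u + a) / 2); destruct b; solve_in_ooI.
  - destruct b; solve_in_ooI.
  - exists (u - 1); destruct b; solve_in_ooI.
Qed.

(* Endpoint-independent forms of [ev_left] and [ev_right]; they agree on nonempty (a, b). *)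
Definition near_left a b (P : R -> Prop) :=
  exists u, in_ooI a b u /\ forall x, in_ooI a b x -> x < u -> P x.
Definition near_right a b (P : R -> Prop) :=
  exists u, in_ooI a b u /\ forall x, in_ooI a b x -> u < x -> P x.

Lemma ev_left_near a b x0 P : in_ooI a b x0 -> (ev_left a b P <-> near_left a b P).
Proof.
  intros H0; unfold near_left; destruct a as [a| |]; simpl; split.
  - intros [d [Hd HP]]; exists (Rmin (a + d) x0); split.
    + unfold Rmin; destruct (Rle_dec _ _); destruct b; solve_in_ooI.
    + intros x Hx Hlt; apply HP; auto; pose proof (Rmin_l (a + d) x0); lra.
  - intros [u [Hu HP]]; exists (u - a); split; [solve_in_ooI|].
    intros x Hx Hlt; apply HP; auto; lra.
  - tauto.
  - intros [u [Hu _]]; destruct b; solve_in_ooI.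
  - intros [M HP]; exists (Rmin M x0); split.
    + unfold Rmin; destruct (Rle_dec _ _); destruct b; solve_in_ooI.
    + intros x Hx Hlt; apply HP; auto; pose proof (Rmin_l M x0); lra.
  - intros [u [Hu HP]]; exists u; auto.
Qed.

Lemma ev_right_near a b x0 P : in_ooI a b x0 -> (ev_right a b P <-> near_right a b P).
Proof.
  intros H0; unfold near_right; destruct b as [b| |]; simpl; split.
  - intros [d [Hd HP]]; exists (Rmax (b - d) x0); split.
    + unfold Rmax; destruct (Rle_dec _ _); destruct a; solve_in_ooI.
    + intros x Hx Hlt; apply HP; auto; pose proof (Rmax_l (b - d) x0); lra.
  - intros [u [Hu HP]]; exists (b - u); split; [destruct a; solve_in_ooI|].
    intros x Hx Hlt; apply HP; auto; lra.
  - intros [M HP]; exists (Rmax M x0); split.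
    + unfold Rmax; destruct (Rle_dec _ _); destruct a; solve_in_ooI.
    + intros x Hx Hlt; apply HP; auto; pose proof (Rmax_l M x0); lra.
  - intros [u [Hu HP]]; exists u; auto.
  - tauto.
  - intros [u [Hu _]]; destruct a; solve_in_ooI.
Qed.

Lemma near_left_and a b P Q :
  near_left a b P -> near_left a b Q -> near_left a b (fun x => P x /\ Q x).
Proof.
  intros [u [Hu HP]] [v [Hv HQ]]; exists (Rmin u v); split.
  - apply (Rmin_case u v (in_ooI a b)); auto.
  - intros x Hx Hlt; pose proof (Rmin_l u v); pose proof (Rmin_r u v); split;
      [apply HP | apply HQ]; auto; lra.
Qed.

Lemma near_left_witness a b P y :
  near_left a b P -> in_ooI a b y -> exists t, in_ooI a b t /\ t < y /\ P t.
Proof.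
  intros [u [Hu HP]] Hy.
  destruct (in_ooI_below a b (Rmin u y)) as [t [Ht Hlt]]; [apply (Rmin_case u y (in_ooI a b)); auto|].
  pose proof (Rmin_l u y); pose proof (Rmin_r u y).
  exists t; split; [auto | split; [lra | apply HP; auto; lra]].
Qed.

Lemma near_right_witness a b P y :
  near_right a b P -> in_ooI a b y -> exists t, in_ooI a b t /\ y < t /\ P t.
Proof.
  intros [u [Hu HP]] Hy.
  destruct (in_ooI_above a b (Rmax u y)) as [t [Ht Hlt]]; [apply (Rmax_case u y (in_ooI a b)); auto|].
  pose proof (Rmax_l u y); pose proof (Rmax_r u y).
  exists t; split; [auto | split; [lra | apply HP; auto; lra]].
Qed.

Lemma near_right_reflect a b P :
  near_right a b P <-> near_left (negER b) (negER a) (fun x => P (- x)).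
Proof.
  split.
  - intros [u [Hu HP]]; exists (- u); split.
    + apply in_ooI_opp; rewrite Ropp_involutive; auto.
    + intros x Hx Hlt; apply HP; [apply in_ooI_opp | lra]; auto.
  - intros [u [Hu HP]]; exists (- u); split.
    + apply in_ooI_opp; auto.
    + intros x Hx Hlt; rewrite <- (Ropp_involutive x); apply HP; [|lra].
      apply in_ooI_opp; rewrite Ropp_involutive; auto.
Qed.

Lemma near_left_reflect a b P :
  near_left a b P <-> near_right (negER b) (negER a) (fun x => P (- x)).
Proof.
  split.
  - intros [u [Hu HP]]; exists (- u); split.
    + apply in_ooI_opp; rewrite Ropp_involutive; auto.
    + intros x Hx Hlt; apply HP; [apply in_ooI_opp | lra]; auto.
  - intros [u [Hu HP]]; exists (- u); split.
    + apply in_ooI_opp; auto.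
    + intros x Hx Hlt; rewrite <- (Ropp_involutive x); apply HP; [|lra].
      apply in_ooI_opp; rewrite Ropp_involutive; auto.
Qed.

Definition ev_mono (ev : (R -> Prop) -> Prop) :=
  forall P Q : R -> Prop, (forall x, P x -> Q x) -> ev P -> ev Q.

Lemma ev_left_mono a b : ev_mono (ev_left a b).
Proof.
  intros P Q HPQ; destruct a; simpl; auto.
  - intros [d [Hd HP]]; exists d; auto.
  - intros [M HP]; exists M; auto.
Qed.

Lemma ev_right_mono a b : ev_mono (ev_right a b).
Proof.
  intros P Q HPQ; destruct b; simpl; auto.
  - intros [d [Hd HP]]; exists d; auto.
  - intros [M HP]; exists M; auto.
Qed.

Lemma tends_transport (ev1 ev2 : (R -> Prop) -> Prop) (h F : R -> R) L :
  (forall P, ev1 P <-> ev2 (fun x => P (h x))) ->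
  (tends ev1 F L <-> tends ev2 (fun x => F (h x)) L).
Proof. intros H; destruct L; simpl; setoid_rewrite H; reflexivity. Qed.

Lemma lim_left_near a b x0 F L :
  in_ooI a b x0 -> (lim_left a b F L <-> tends (near_left a b) F L).
Proof. intros H0; apply (tends_transport _ _ (fun x => x)); intros; apply ev_left_near with x0; auto. Qed.

Lemma lim_right_near a b x0 F L :
  in_ooI a b x0 -> (lim_right a b F L <-> tends (near_right a b) F L).
Proof. intros H0; apply (tends_transport _ _ (fun x => x)); intros; apply ev_right_near with x0; auto. Qed.

Lemma lim_right_reflect a b x0 F L : in_ooI a b x0 ->
  (lim_right a b F L <-> lim_left (negER b) (negER a) (fun x => F (- x)) L).
Proof.
  intros H0; rewrite (lim_right_near a b x0), (lim_left_near _ _ (- x0)).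
  - apply tends_transport; intros; apply near_right_reflect.
  - apply in_ooI_opp; rewrite Ropp_involutive; auto.
  - auto.
Qed.

Lemma lim_left_reflect a b x0 F L : in_ooI a b x0 ->
  (lim_left a b F L <-> lim_right (negER b) (negER a) (fun x => F (- x)) L).
Proof.
  intros H0; rewrite (lim_left_near a b x0), (lim_right_near _ _ (- x0)).
  - apply tends_transport; intros; apply near_left_reflect.
  - apply in_ooI_opp; rewrite Ropp_involutive; auto.
  - auto.
Qed.

Lemma tends_opp ev F L :
  ev_mono ev -> (tends ev (fun x => - F x) (negER L) <-> tends ev F L).
Proof.
  intros Hm; destruct L as [l| |]; simpl; split; intros H e.
  - intros He; apply Hm with (2 := H e He); intros x.
    replace (- F x - - l) with (- (F x - l)) by ring; rewrite Rabs_Ropp; auto.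
  - intros He; apply Hm with (2 := H e He); intros x.
    replace (- F x - - l) with (- (F x - l)) by ring; rewrite Rabs_Ropp; auto.
  - apply Hm with (2 := H (- e)); intros x; lra.
  - apply Hm with (2 := H (- e)); intros x; lra.
  - apply Hm with (2 := H (- e)); intros x; lra.
  - apply Hm with (2 := H (- e)); intros x; lra.
Qed.

Lemma lim_left_le a b F lam x : in_ooI a b x -> lim_left a b F (Fin lam) ->
  (forall t, in_ooI a b t -> t < x -> F t <= F x) -> lam <= F x.
Proof.
  intros Hx Hlim Hle; apply Rnot_lt_le; intros Hlt.
  apply (lim_left_near a b x) in Hlim; auto.
  destruct (near_left_witness a b _ x (Hlim (lam - F x) ltac:(lra)) Hx) as [t [Ht [Htx Hclose]]].
  apply Rabs_def2 in Hclose; specialize (Hle t Ht Htx); lra.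
Qed.

Lemma lim_left_ge a b F lam x : in_ooI a b x -> lim_left a b F (Fin lam) ->
  (forall t, in_ooI a b t -> t < x -> F x <= F t) -> F x <= lam.
Proof.
  intros Hx Hlim Hge.
  assert (- lam <= - F x); [|lra].
  apply (lim_left_le a b (fun t => - F t)); auto.
  - apply (tends_opp _ F (Fin lam)); auto; apply ev_left_mono.
  - intros t Ht Htx; specialize (Hge t Ht Htx); lra.
Qed.

Lemma lim_right_ge a b F L lam x : in_ooI a b x -> lim_right a b F L ->
  (forall t, in_ooI a b t -> x < t -> lam <= F t) -> ER_ge L lam.
Proof.
  intros Hx Hlim Hge; apply (lim_right_near a b x) in Hlim; auto.
  destruct L as [l| |]; simpl in *; auto.
  - apply Rnot_lt_le; intros Hlt.
    destruct (near_right_witness a b _ x (Hlim (lam - l) ltac:(lra)) Hx) as [t [Ht [Hxt Hclose]]].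
    apply Rabs_def2 in Hclose; specialize (Hge t Ht Hxt); lra.
  - destruct (near_right_witness a b _ x (Hlim lam) Hx) as [t [Ht [Hxt Hlt]]].
    specialize (Hge t Ht Hxt); lra.
Qed.

Lemma lim_right_le a b F L mu x : in_ooI a b x -> lim_right a b F L ->
  (forall t, in_ooI a b t -> x < t -> F t <= mu) -> ER_le L mu.
Proof.
  intros Hx Hlim Hle.
  assert (Hneg : ER_ge (negER L) (- mu)).
  { apply (lim_right_ge a b (fun t => - F t) _ _ x); auto.
    - apply tends_opp; auto; apply ev_right_mono.
    - intros t Ht Hxt; specialize (Hle t Ht Hxt); lra. }
  destruct L; simpl in *; lra.
Qed.

Lemma lim_right_of_incr a b F y : in_ooI a b y ->
  (forall u v, in_ooI a b u -> in_ooI a b v -> y < u -> u < v -> F u <= F v) ->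
  exists L, lim_right a b F L.
Proof.
  intros Hy Hmono.
  assert (Hnear : forall M, (exists u, in_ooI a b u /\ y < u /\ M < F u) ->
            near_right a b (fun x => M < F x)).
  { intros M [u [Hu [Hyu HMu]]]; exists u; split; auto.
    intros x Hx Hux; specialize (Hmono u x Hu Hx Hyu Hux); lra. }
  destruct (classic (exists M, forall u, in_ooI a b u -> y < u -> F u <= M))
    as [[M HM] | Hunbounded].
  - set (E := fun z => exists u, in_ooI a b u /\ y < u /\ z = F u).
    destruct (completeness E) as [s [Hub Hlub]].
    + exists M; intros z [u [Hu [Hyu ->]]]; auto.
    + destruct (in_ooI_above a b y Hy) as [x [Hx Hyx]]; exists (F x), x; auto.
    + exists (Fin s); apply (lim_right_near a b y); auto; intros e He.
      assert (Happrox : exists u, in_ooI a b u /\ y < u /\ s - e < F u).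
      { apply NNPP; intros Hn.
        enough (s <= s - e) by lra.
        apply Hlub; intros z [u [Hu [Hyu ->]]].
        apply Rnot_lt_le; intros Hlt; apply Hn; exists u; auto. }
      destruct (Hnear _ Happrox) as [u [Hu Hclose]]; exists (Rmax u y); split.
      * apply (Rmax_case u y (in_ooI a b)); auto.
      * intros x Hx Hlt; pose proof (Rmax_l u y); pose proof (Rmax_r u y).
        assert (F x <= s) by (apply Hub; exists x; split; [auto | split; [lra | reflexivity]]).
        specialize (Hclose x Hx ltac:(lra)); apply Rabs_def1; lra.
  - exists PInf; apply (lim_right_near a b y); auto; intros M; apply Hnear.
    apply NNPP; intros Hn; apply Hunbounded; exists M; intros u Hu Hyu.
    apply Rnot_lt_le; intros Hlt; apply Hn; exists u; auto.
Qed.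

Lemma lim_right_of_decr a b F y : in_ooI a b y ->
  (forall u v, in_ooI a b u -> in_ooI a b v -> y < u -> u < v -> F v <= F u) ->
  exists L, lim_right a b F L.
Proof.
  intros Hy Hmono.
  destruct (lim_right_of_incr a b (fun x => - F x) y Hy) as [L HL].
  { intros u v Hu Hv Hyu Huv; specialize (Hmono u v Hu Hv Hyu Huv); lra. }
  exists (negER L); apply (tends_opp _ F (negER L)); [apply ev_right_mono|].
  rewrite negER_involutive; auto.
Qed.

Lemma cauchy_mvt a b f g f' g' u v :
  (forall x, in_ooI a b x -> derivable_pt_lim f x (f' x)) ->
  (forall x, in_ooI a b x -> derivable_pt_lim g x (g' x)) ->
  in_ooI a b u -> in_ooI a b v -> u < v ->
  exists z, u < z < v /\ (g v - g u) * f' z = (f v - f u) * g' z.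
Proof.
  intros Hf Hg Hu Hv Huv.
  assert (Hin : forall z, u <= z <= v -> in_ooI a b z) by (intros; apply in_ooI_between with u v; auto).
  assert (pf : forall z, u < z < v -> derivable_pt f z)
    by (intros z Hz; exists (f' z); apply Hf, Hin; lra).
  assert (pg : forall z, u < z < v -> derivable_pt g z)
    by (intros z Hz; exists (g' z); apply Hg, Hin; lra).
  destruct (MVT f g u v pf pg Huv) as [z [Hz Heq]].
  - intros z Hz; apply derivable_continuous_pt; exists (f' z); apply Hf, Hin; auto.
  - intros z Hz; apply derivable_continuous_pt; exists (g' z); apply Hg, Hin; auto.
  - exists z; split; auto.
    rewrite (derive_pt_eq_0 f z (f' z)), (derive_pt_eq_0 g z (g' z)) in Heq; auto;
      [apply Hg | apply Hf]; apply Hin; lra.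
Qed.

Lemma ivt_between h u v k : (forall z, u <= z <= v -> continuity_pt h z) -> u < v ->
  (h u < k < h v \/ h v < k < h u) -> exists s, u <= s <= v /\ h s = k.
Proof.
  intros Hcont Huv [Hk | Hk].
  - destruct (IVT_interv (fun x => h x - k) u v) as [s [Hs Hs0]]; try lra.
    + intros z Hz; apply (continuity_pt_minus h (fct_cte k)); auto; apply continuity_pt_const.
      intros x y; reflexivity.
    + exists s; split; auto; lra.
  - destruct (IVT_interv (fun x => k - h x) u v) as [s [Hs Hs0]]; try lra.
    + intros z Hz; apply (continuity_pt_minus (fct_cte k) h); auto; apply continuity_pt_const.
      intros x y; reflexivity.
    + exists s; split; auto; lra.
Qed.

Lemma ratio_in_unit u v : 0 < u < v \/ v < u < 0 -> 0 < u / v < 1.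
Proof.
  intros H; assert (v <> 0) by lra.
  assert (Hw : u / v * v = u) by (field; auto); nra.
Qed.

Section Denominator.

Variables (a b : ER) (g g' : R -> R).
Hypothesis Hg : forall x, in_ooI a b x -> derivable_pt_lim g x (g' x).
Hypothesis Hg'0 : forall x, in_ooI a b x -> g' x <> 0.

Lemma denominator_injective u v : in_ooI a b u -> in_ooI a b v -> u < v -> g u <> g v.
Proof.
  intros Hu Hv Huv Heq.
  destruct (cauchy_mvt a b (fun x => x) g (fun _ => 1) g' u v) as [z [Hz Hmvt]]; auto.
  { intros x _; apply derivable_pt_lim_id. }
  apply (Hg'0 z); [apply in_ooI_between with u v; auto; lra|].
  rewrite Heq in Hmvt; nra.
Qed.

Lemma denominator_between t y x : in_ooI a b t -> in_ooI a b y -> in_ooI a b x ->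
  t < y -> y < x -> (g t < g y < g x) \/ (g x < g y < g t).
Proof.
  intros Ht Hy Hx Hty Hyx.
  assert (Hcont : forall u v, in_ooI a b u -> in_ooI a b v ->
            forall z, u <= z <= v -> continuity_pt g z).
  { intros u v Hu Hv z Hz; apply derivable_continuous_pt; exists (g' z).
    apply Hg, in_ooI_between with u v; auto. }
  assert (Hinj : forall u v, in_ooI a b u -> in_ooI a b v -> u < v -> g u <> g v)
    by exact denominator_injective.
  assert (Hty' := Hinj t y Ht Hy Hty); assert (Hyx' := Hinj y x Hy Hx Hyx).
  assert (Htx := Hinj t x Ht Hx ltac:(lra)).
  assert (Hlow : forall s, t <= s <= y -> g s <> g x).
  { intros s Hs; apply Hinj; auto; [apply in_ooI_between with t y; auto | lra]. }
  assert (Hhigh : forall s, y <= s <= x -> g t <> g s).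
  { intros s Hs; apply Hinj; auto; [apply in_ooI_between with y x; auto | lra]. }
  destruct (Rtotal_order (g t) (g y)) as [Hlt | [Heq | Hgt]]; [| contradiction |];
  destruct (Rtotal_order (g t) (g x)) as [Hlt' | [Heq' | Hgt']]; try contradiction;
  destruct (Rtotal_order (g y) (g x)) as [Hlt'' | [Heq'' | Hgt'']]; try contradiction;
  try lra.
  (* In each remaining ordering g y lies above or below both g t and g x, and the IVT
     yields a second preimage of g x in [t, y] or of g t in [y, x]. *)
  all: first
    [ destruct (ivt_between g t y (g x) (Hcont t y Ht Hy) Hty ltac:(lra)) as [s [Hs Hgs]];
      destruct (Hlow s Hs); auto
    | destruct (ivt_between g y x (g t) (Hcont y x Hy Hx) Hyx ltac:(lra)) as [s [Hs Hgs]];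
      destruct (Hhigh s Hs); auto ].
Qed.

Hypothesis Hg_lim : lim_left a b g (Fin 0).

Lemma denominator_ratio y x : in_ooI a b y -> in_ooI a b x -> y < x -> 0 < g y / g x < 1.
Proof.
  intros Hy Hx Hyx; apply ratio_in_unit.
  destruct (in_ooI_below a b y Hy) as [t [Ht Hty]].
  destruct (denominator_between t y x) as [Hincr | Hdecr]; auto.
  - assert (0 <= g t); [|lra].
    apply (lim_left_le a b g 0 t); auto.
    intros s Hs Hst; destruct (denominator_between s t y); auto; lra.
  - assert (g t <= 0); [|lra].
    apply (lim_left_ge a b g 0 t); auto.
    intros s Hs Hst; destruct (denominator_between s t y); auto; lra.
Qed.

Lemma denominator_nonzero y : in_ooI a b y -> g y <> 0.
Proof.
  intros Hy Hzero; destruct (in_ooI_above a b y Hy) as [x [Hx Hyx]].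
  pose proof (denominator_ratio y x Hy Hx Hyx) as Hw.
  rewrite Hzero in Hw; unfold Rdiv in Hw; rewrite Rmult_0_l in Hw; lra.
Qed.

End Denominator.

Lemma mix_lt w u v : 0 < w < 1 -> u < v -> u < w * u + (1 - w) * v < v.
Proof. intros; split; nra. Qed.

Lemma mix_gt w u v : 0 < w < 1 -> v < u -> v < w * u + (1 - w) * v < u.
Proof. intros; split; nra. Qed.

Section MonotoneRatio.

Variables (a b : ER) (f g f' g' q r : R -> R) (c lam : R).
Hypothesis Hf : forall x, in_ooI a b x -> derivable_pt_lim f x (f' x).
Hypothesis Hg : forall x, in_ooI a b x -> derivable_pt_lim g x (g' x).
Hypothesis Hg'0 : forall x, in_ooI a b x -> g' x <> 0.
Hypothesis Hq : forall x, q x = f x / g x.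
Hypothesis Hr : forall x, r x = f' x / g' x.
Hypothesis Hg_lim : lim_left a b g (Fin 0).

Lemma ratio_mean_value y x : in_ooI a b y -> in_ooI a b x -> y < x ->
  exists z w, y < z < x /\ 0 < w < 1 /\ w = g y / g x /\ q x = w * q y + (1 - w) * r z.
Proof.
  intros Hy Hx Hyx.
  destruct (cauchy_mvt a b f g f' g' y x) as [z [Hz Hmvt]]; auto.
  assert (Hgz := Hg'0 z (in_ooI_between a b y x z Hy Hx ltac:(lra))).
  assert (Hgy := denominator_nonzero a b g g' Hg Hg'0 Hg_lim y Hy).
  assert (Hgx := denominator_nonzero a b g g' Hg Hg'0 Hg_lim x Hx).
  assert (Hgxy := denominator_injective a b g g' Hg Hg'0 y x Hy Hx Hyx).
  exists z, (g y / g x); repeat split; try lra.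
  1-2: apply (denominator_ratio a b g g'); auto.
  rewrite !Hq, Hr.
  replace (f' z) with ((f x - f y) * g' z / (g x - g y)).
  - field; repeat split; auto; lra.
  - apply (Rmult_eq_reg_l (g x - g y)); [rewrite Hmvt; field; lra | lra].
Qed.

Hypothesis Hc : in_ooI a b c.
Hypothesis Hq_lim : lim_left a b q (Fin lam).
Hypothesis Hr_incr : strict_incr_on a (Fin c) r.
Hypothesis Hr_decr : strict_decr_on (Fin c) b r.

Lemma deriv_ratio_lt_left u v : in_ooI a b u -> in_ooI a b v -> u < v -> v < c -> r u < r v.
Proof. intros; apply Hr_incr; auto; apply (in_ooI_lower a b c); auto; split; auto; lra. Qed.

Lemma deriv_ratio_gt_right u v : in_ooI a b u -> in_ooI a b v -> c < u -> u < v -> r v < r u.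
Proof. intros; apply Hr_decr; auto; apply (in_ooI_upper a b c); auto; split; auto; lra. Qed.

Lemma ratio_le_deriv_ratio_left y : in_ooI a b y -> y < c -> q y <= r y.
Proof.
  intros Hy Hyc; apply Rnot_lt_le; intros Hlt.
  (* Near a, w = g t / g y < eps and q t - r y < B, so
     q y - r y = w (q t - r y) + (1 - w) (r z - r y) < eps B = q y - r y. *)
  set (B := 1 + Rabs (lam - r y)); set (eps := (q y - r y) / B).
  assert (HB : 0 < B) by (pose proof (Rabs_pos (lam - r y)); unfold B; lra).
  assert (Heps : 0 < eps) by (apply Rdiv_lt_0_compat; lra).
  assert (Hgy : 0 < Rabs (g y))
    by (apply Rabs_pos_lt, (denominator_nonzero a b g g'); auto).
  pose proof (proj1 (lim_left_near a b y q _ Hy) Hq_lim) as Hq_near.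
  pose proof (proj1 (lim_left_near a b y g _ Hy) Hg_lim) as Hg_near.
  destruct (near_left_witness a b _ y
              (near_left_and a b _ _ (Hq_near 1 ltac:(lra)) (Hg_near (eps * Rabs (g y)) ltac:(nra))) Hy)
    as [t [Ht [Hty [Hqt Hgt]]]].
  destruct (ratio_mean_value t y Ht Hy Hty) as [z [w [Hz [Hw [Hw_def Hmix]]]]].
  assert (Hzin : in_ooI a b z) by (apply in_ooI_between with t y; auto; lra).
  assert (Hrz : r z < r y) by (apply deriv_ratio_lt_left; auto; lra).
  assert (Hw_eps : w < eps).
  { assert (Rabs (g t) = w * Rabs (g y)).
    { rewrite Hw_def, <- (Rabs_pos_eq (g t / g y)), <- Rabs_mult by lra; f_equal; field.
      apply (denominator_nonzero a b g g'); auto. }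
    rewrite Rminus_0_r in Hgt; nra. }
  assert (Hqt_bound : q t - r y < B)
    by (apply Rabs_def2 in Hqt; pose proof (Rle_abs (lam - r y)); unfold B; lra).
  assert (Heps_B : eps * B = q y - r y) by (unfold eps; field; lra).
  nra.
Qed.

Lemma ratio_incr_left y x : in_ooI a b y -> in_ooI a b x -> y < x -> x <= c -> q y < q x.
Proof.
  intros Hy Hx Hyx Hxc.
  destruct (ratio_mean_value y x Hy Hx Hyx) as [z [w [Hz [Hw [_ Hmix]]]]].
  assert (Hzin : in_ooI a b z) by (apply in_ooI_between with y x; auto; lra).
  assert (r y < r z) by (apply deriv_ratio_lt_left; auto; lra).
  assert (q y <= r y) by (apply ratio_le_deriv_ratio_left; auto; lra).
  rewrite Hmix; apply mix_lt; auto; lra.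
Qed.

Lemma lim_lt_ratio_left x : in_ooI a b x -> x <= c -> lam < q x.
Proof.
  intros Hx Hxc; destruct (in_ooI_below a b x Hx) as [m [Hm Hmx]].
  assert (lam <= q m); [|pose proof (ratio_incr_left m x Hm Hx Hmx Hxc); lra].
  apply (lim_left_le a b q lam m); auto.
  intros t Ht Htm; apply Rlt_le, ratio_incr_left; auto; lra.
Qed.

Lemma ratio_decr_after_crossing y x : in_ooI a b y -> in_ooI a b x -> c < y ->
  r y <= q y -> y < x -> r x < q x /\ q x < q y.
Proof.
  intros Hy Hx Hcy Hcross Hyx.
  destruct (ratio_mean_value y x Hy Hx Hyx) as [z [w [Hz [Hw [_ Hmix]]]]].
  assert (Hzin : in_ooI a b z) by (apply in_ooI_between with y x; auto; lra).
  assert (r z < r y) by (apply deriv_ratio_gt_right; auto; lra).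
  assert (r x < r z) by (apply deriv_ratio_gt_right; auto; lra).
  assert (r z < q x < q y) by (rewrite Hmix; apply mix_gt; auto; lra).
  lra.
Qed.

Lemma ratio_incr_below_deriv_ratio u v :
  (forall y, in_ooI a b y -> c < y -> q y < r y) ->
  in_ooI a b u -> in_ooI a b v -> c < u -> u < v -> q u < q v.
Proof.
  intros Hbelow Hu Hv Hcu Huv.
  destruct (ratio_mean_value u v Hu Hv Huv) as [z [w [Hz [Hw [_ Hmix]]]]].
  assert (Hzin : in_ooI a b z) by (apply in_ooI_between with u v; auto; lra).
  assert (r v < r z) by (apply deriv_ratio_gt_right; auto; lra).
  assert (q v < r v) by (apply Hbelow; auto; lra).
  assert (q u < r z) by nra.
  rewrite Hmix; apply mix_lt; auto.
Qed.

Lemma ratio_lim_right_exists : exists L, lim_right a b q L.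
Proof.
  destruct (classic (exists y, in_ooI a b y /\ c < y /\ r y <= q y))
    as [[y [Hy [Hcy Hcross]]] | Hnever].
  - apply lim_right_of_decr with y; auto.
    intros u v Hu Hv Hyu Huv; apply Rlt_le.
    apply (ratio_decr_after_crossing u v); auto; [lra|].
    apply Rlt_le, (ratio_decr_after_crossing y u); auto.
  - apply lim_right_of_incr with c; auto.
    intros u v Hu Hv Hcu Huv; apply Rlt_le, ratio_incr_below_deriv_ratio; auto.
    intros y' Hy' Hcy'; apply Rnot_le_lt; intros Hle; apply Hnever; exists y'; auto.
Qed.

Lemma ratio_crossing_below_lim x : in_ooI a b x -> c < x -> q x <= lam -> r x < q x.
Proof.
  intros Hx Hcx Hle.
  destruct (ratio_mean_value c x Hc Hx Hcx) as [z [w [Hz [Hw [_ Hmix]]]]].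
  assert (Hqc : lam < q c) by (apply lim_lt_ratio_left; auto; lra).
  assert (Hzin : in_ooI a b z) by (apply in_ooI_between with c x; auto; lra).
  assert (r x < r z) by (apply deriv_ratio_gt_right; auto; lra).
  destruct (Rlt_or_le (r z) (q c)) as [Hlt | Hge].
  - assert (r z < q x) by (rewrite Hmix; apply mix_gt; auto). lra.
  - exfalso; nra.
Qed.

Lemma ratio_gt_lim_iff L : lim_right a b q L ->
  ((forall x, in_ooI a b x -> q x > lam) <-> ER_ge L lam).
Proof.
  intros HL; split.
  - intros Hgt; apply (lim_right_ge a b q L lam c); auto.
    intros t Ht _; apply Rlt_le, Hgt; auto.
  - intros HLge x Hx; destruct (Rle_or_lt x c) as [Hxc | Hcx].
    + apply lim_lt_ratio_left; auto.
    + apply Rnot_le_lt; intros Hle.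
      assert (Hcross := ratio_crossing_below_lim x Hx Hcx Hle).
      destruct (in_ooI_above a b x Hx) as [x1 [Hx1 Hxx1]].
      destruct (ratio_decr_after_crossing x x1) as [Hcross1 Hq1]; auto; try lra.
      assert (ER_le L (q x1)).
      { apply (lim_right_le a b q L (q x1) x1); auto.
        intros t Ht Hx1t; apply Rlt_le, (ratio_decr_after_crossing x1 t); auto; lra. }
      destruct L; simpl in *; lra.
Qed.

End MonotoneRatio.

Lemma ER_ge_negER L lam : ER_ge (negER L) (- lam) <-> ER_le L lam.
Proof. destruct L; simpl; lra. Qed.

Lemma ratio_criterion_left a b f g f' g' q r c lam :
  (forall x, in_ooI a b x -> derivable_pt_lim f x (f' x)) ->
  (forall x, in_ooI a b x -> derivable_pt_lim g x (g' x)) ->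
  (forall x, in_ooI a b x -> g' x <> 0) ->
  in_ooI a b c ->
  (forall x, q x = f x / g x) -> (forall x, r x = f' x / g' x) ->
  lim_left a b g (Fin 0) -> lim_left a b q (Fin lam) ->
  ((strict_incr_on a (Fin c) r /\ strict_decr_on (Fin c) b r) ->
     (exists L, lim_right a b q L) /\
     forall L, lim_right a b q L -> ((forall x, in_ooI a b x -> q x > lam) <-> ER_ge L lam)) /\
  ((strict_decr_on a (Fin c) r /\ strict_incr_on (Fin c) b r) ->
     (exists L, lim_right a b q L) /\
     forall L, lim_right a b q L -> ((forall x, in_ooI a b x -> q x < lam) <-> ER_le L lam)).
Proof.
  intros Hf Hg Hg'0 Hc Hq Hr Hg_lim Hq_lim; split; intros [Hleft Hright].
  - split; [apply (ratio_lim_right_exists a b f g f' g' q r c)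
           | intros L HL; apply (ratio_gt_lim_iff a b f g f' g' q r c)]; auto.
  - set (nf := fun x => - f x); set (nf' := fun x => - f' x).
    set (nq := fun x => - q x); set (nr := fun x => - r x).
    assert (Hnf : forall x, in_ooI a b x -> derivable_pt_lim nf x (nf' x))
      by (intros x Hx; exact (derivable_pt_lim_opp f x (f' x) (Hf x Hx))).
    assert (Hnq : forall x, nq x = nf x / g x) by (intros x; unfold nq, nf; rewrite Hq; unfold Rdiv; ring).
    assert (Hnr : forall x, nr x = nf' x / g' x) by (intros x; unfold nr, nf'; rewrite Hr; unfold Rdiv; ring).
    assert (Hnq_lim : lim_left a b nq (Fin (- lam)))
      by (apply (tends_opp _ q (Fin lam)); auto; apply ev_left_mono).
    assert (Hnr_incr : strict_incr_on a (Fin c) nr)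
      by (intros x y Hx Hy Hxy; specialize (Hleft x y Hx Hy Hxy); unfold nr; lra).
    assert (Hnr_decr : strict_decr_on (Fin c) b nr)
      by (intros x y Hx Hy Hxy; specialize (Hright x y Hx Hy Hxy); unfold nr; lra).
    split.
    + destruct (ratio_lim_right_exists a b nf g nf' g' nq nr c) as [L HL]; auto.
      exists (negER L); apply (tends_opp _ q (negER L)); [apply ev_right_mono|].
      rewrite negER_involutive; auto.
    + intros L HL; rewrite <- ER_ge_negER.
      rewrite <- (ratio_gt_lim_iff a b nf g nf' g' nq nr c (- lam)); auto.
      * unfold nq; split; intros Hall x Hx; specialize (Hall x Hx); lra.
      * apply (tends_opp _ q L); auto; apply ev_right_mono.
Qed.

Lemma derivable_pt_lim_reflect f x l :
  derivable_pt_lim f (- x) l -> derivable_pt_lim (fun y => f (- y)) x (- l).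
Proof.
  intros H; replace (- l) with (l * -1) by ring.
  apply (derivable_pt_lim_comp (- id)%F f x (-1) l); auto.
  apply derivable_pt_lim_opp, derivable_pt_lim_id.
Qed.

Lemma strict_incr_on_reflect a b h :
  strict_decr_on a b h -> strict_incr_on (negER b) (negER a) (fun x => h (- x)).
Proof. intros Hdecr x y Hx Hy Hxy; apply Hdecr; try apply in_ooI_opp; auto; lra. Qed.

Lemma strict_decr_on_reflect a b h :
  strict_incr_on a b h -> strict_decr_on (negER b) (negER a) (fun x => h (- x)).
Proof. intros Hincr x y Hx Hy Hxy; apply Hincr; try apply in_ooI_opp; auto; lra. Qed.

Lemma forall_in_ooI_reflect a b (P : R -> Prop) :
  (forall x, in_ooI (negER b) (negER a) x -> P (- x)) <-> (forall x, in_ooI a b x -> P x).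
Proof.
  split; intros H x Hx.
  - rewrite <- (Ropp_involutive x); apply H, in_ooI_opp; rewrite Ropp_involutive; auto.
  - apply H, in_ooI_opp; auto.
Qed.

Lemma ratio_criterion_right a b f g f' g' q r c lam :
  (forall x, in_ooI a b x -> derivable_pt_lim f x (f' x)) ->
  (forall x, in_ooI a b x -> derivable_pt_lim g x (g' x)) ->
  (forall x, in_ooI a b x -> g' x <> 0) ->
  in_ooI a b c ->
  (forall x, q x = f x / g x) -> (forall x, r x = f' x / g' x) ->
  lim_right a b g (Fin 0) -> lim_right a b q (Fin lam) ->
  ((strict_incr_on a (Fin c) r /\ strict_decr_on (Fin c) b r) ->
     (exists L, lim_left a b q L) /\
     forall L, lim_left a b q L -> ((forall x, in_ooI a b x -> q x > lam) <-> ER_ge L lam)) /\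
  ((strict_decr_on a (Fin c) r /\ strict_incr_on (Fin c) b r) ->
     (exists L, lim_left a b q L) /\
     forall L, lim_left a b q L -> ((forall x, in_ooI a b x -> q x < lam) <-> ER_le L lam)).
Proof.
  intros Hf Hg Hg'0 Hc Hq Hr Hg_lim Hq_lim.
  destruct (ratio_criterion_left (negER b) (negER a) (fun x => f (- x)) (fun x => g (- x))
              (fun x => - f' (- x)) (fun x => - g' (- x)) (fun x => q (- x)) (fun x => r (- x))
              (- c) lam) as [Hcase_I Hcase_II].
  - intros x Hx; apply derivable_pt_lim_reflect, Hf, in_ooI_opp; auto.
  - intros x Hx; apply derivable_pt_lim_reflect, Hg, in_ooI_opp; auto.
  - intros x Hx; apply Ropp_neq_0_compat, Hg'0, in_ooI_opp; auto.
  - apply in_ooI_opp; rewrite Ropp_involutive; auto.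
  - intros x; apply Hq.
  - intros x; rewrite Hr; unfold Rdiv; rewrite Rinv_opp; ring.
  - apply (lim_right_reflect a b c); auto.
  - apply (lim_right_reflect a b c); auto.
  - split; intros [Hleft Hright].
    + destruct (Hcase_I (conj (strict_incr_on_reflect _ _ _ Hright)
                              (strict_decr_on_reflect _ _ _ Hleft))) as [[L HL] Hiff].
      split; [exists L; apply (lim_left_reflect a b c); auto|].
      intros L' HL'; rewrite <- (Hiff L' (proj1 (lim_left_reflect a b c q L' Hc) HL')).
      symmetry; exact (forall_in_ooI_reflect a b (fun v => q v > lam)).
    + destruct (Hcase_II (conj (strict_decr_on_reflect _ _ _ Hright)
                               (strict_incr_on_reflect _ _ _ Hleft))) as [[L HL] Hiff].
      split; [exists L; apply (lim_left_reflect a b c); auto|].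
      intros L' HL'; rewrite <- (Hiff L' (proj1 (lim_left_reflect a b c q L' Hc) HL')).
      symmetry; exact (forall_in_ooI_reflect a b (fun v => q v < lam)).
Qed.

Theorem mainTheorem5 (a b : ER) (f g f' g' : R -> R) (c : R)
  (Hab : ER_lt a b)
  (Hf : forall x, in_ooI a b x -> derivable_pt_lim f x (f' x))
  (Hg : forall x, in_ooI a b x -> derivable_pt_lim g x (g' x))
  (Hg0 : forall x, in_ooI a b x -> g' x <> 0)
  (Hc : in_ooI a b c) :
  let r := fun x => f' x / g' x in
  let q := fun x => f x / g x in
  let caseI := strict_incr_on a (Fin c) r /\ strict_decr_on (Fin c) b r in
  let caseII := strict_decr_on a (Fin c) r /\ strict_incr_on (Fin c) b r in
  (* (i) *)
  (forall lam : R,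
     lim_left a b f (Fin 0) -> lim_left a b g (Fin 0) -> lim_left a b q (Fin lam) ->
     (caseI ->
        (exists L, lim_right a b q L) /\
        forall L, lim_right a b q L ->
          ((forall x, in_ooI a b x -> q x > lam) <-> ER_ge L lam)) /\
     (caseII ->
        (exists L, lim_right a b q L) /\
        forall L, lim_right a b q L ->
          ((forall x, in_ooI a b x -> q x < lam) <-> ER_le L lam))) /\
  (* (ii) *)
  (forall lam : R,
     lim_right a b f (Fin 0) -> lim_right a b g (Fin 0) -> lim_right a b q (Fin lam) ->
     (caseI ->
        (exists L, lim_left a b q L) /\
        forall L, lim_left a b q L ->
          ((forall x, in_ooI a b x -> q x > lam) <-> ER_ge L lam)) /\
     (caseII ->
        (exists L, lim_left a b q L) /\
        forall L, lim_left a b q L ->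
          ((forall x, in_ooI a b x -> q x < lam) <-> ER_le L lam))).
Proof.
  intros r q caseI caseII; split; intros lam _ Hg_lim Hq_lim.
  - apply (ratio_criterion_left a b f g f' g' q r c lam); auto.
  - apply (ratio_criterion_right a b f g f' g' q r c lam); auto.
Qed.
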